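(* Assume the setting below ($\mathcal{S}$ convex and generating $\Lambda$; conformal data $\mathcal{R}$). Then the moment map $\mu_{\mathcal{R}}$ satisfies the transversality condition at every point of $P=\mu_{\mathcal{R}}^{-1}(0)\setminus\{0\}$: for every $p\in P$ and every nonzero $a\in\mathfrak g$ there exists $a'\in\mathfrak g$ with $(I_1\,d\langle(\mu_{\mathcal R})_1,a'\rangle)_p(\mathbf{A}_p(a))\neq 0$.
   Context: $F$ is a 2-torus, Lie algebra $\mathfrak f\cong\mathbb{R}^2$, lattice $\Lambda\cong\mathbb{Z}^2$. $\mathcal{S}=\{u_1,\dots,u_k\}\subset\Lambda$ is an ordered set generating $\Lambda$, with cyclically consecutive elements linearly independent, each $u_i$ either $(p,0)$ with $p>0$ or with positive second coordinate, $u_1=(p,0)$, and convex (i.e. $u_1,\dots,u_k$ are the outward normals of a convex polygon; equivalently the associated compact toric orbifold has negative-definite intersection form). Set $v_1=u_1+u_k$, $v_i=u_i-u_{i-1}$ ($2\le i\le k$), and $\Omega:\mathbb{R}^k\to\mathfrak f$, $e_i\mapsto v_i$; $\mathfrak g=\ker\Omega$ (dimension $k-2$). Conformal data $\mathcal R$: points $\zeta_1,\dots,\zeta_k$ with $|\zeta_i|=1$, $0=\arg\zeta_1<\dots<\arg\zeta_k<2\pi$; $z_i=\zeta_i^{1/2}$ with $0\le\arg z_i<\pi$, $\boldsymbol z=(z_1,\dots,z_k)$, $\mathbb W=\mathrm{span}\{\mathrm{Re}\boldsymbol z,\mathrm{Im}\boldsymbol z\}\subset(\mathbb{R}^k)^*$,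 and $B^*:(\mathbb{R}^k)^*\to\mathfrak g^*$ a linear map with kernel $\mathbb W$. On $\mathbb{H}^k$ with coordinates $q_m=x_m+y_mj$ ($x_m,y_m\in\mathbb C$) and $I_1,I_2,I_3$ = left multiplication by $i,j,k$, let $\mathcal U=\mathbb{H}^k/\{\pm1\}$ (associated bundle of $\mathbb{HP}^{k-1}$). The torus $T^k$ = (maximal torus $\{(\lambda_1,\dots,\lambda_k):\lambda_m\in U(1)\subset\mathbb C\}$ of $Sp(k)$ acting by right multiplication $q_m\mapsto q_m\lambda_m$) modulo $(-1,\dots,-1)$ acts on $\mathcal U$; its Lie algebra is $\mathbb{R}^k$ with $e_m$ generating the rotation of the $m$-th factor, and $\mathbf A(a)$ denotes the vector field on $\mathcal U$ generated by $a\in\mathfrak g\subset\mathbb{R}^k$. Define $\nu_m:\mathcal U\to\mathrm{Im}\mathbb{H}$, $\nu_m(q)=(|x_m|^2-|y_m|^2,\ \mathrm{Re}(2ix_my_m),\ \mathrm{Im}(2ix_my_m))$, $\nu=(\nu_1,\dots,\nu_k):\mathcal U\to(\mathbb{R}^k)^*\otimes\mathrm{Im}\mathbb H$, and $\mu_{\mathcal R}=B^*\circ\nu:\mathcal U\to\mathfrak g^*\otimes\mathrm{Im}\mathbb{H}$, with components $(\mu_{\mathcal R})_1,(\mu_{\mathcal R})_2,(\mu_{\mathcal R})_3$. $I_1$ acts on 1-forms by the transpose action. *)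

From HB Require Import structures.
From mathcomp Require Import all_boot all_order all_algebra.
From mathcomp Require Import all_classical all_reals all_analysis.
Set Implicit Arguments. Unset Strict Implicit. Unset Printing Implicit Defensive.
Import Order.TTheory GRing.Theory Num.Theory.
Import numFieldNormedType.Exports.
Local Open Scope ring_scope.

(* ---------- lattice data S = (u_1,...,u_k), indices 0..k-1 ---------- *)
Definition det2 (a b : int * int) : int := a.1 * b.2 - a.2 * b.1.

Definition generates_lattice (k : nat) (u : 'I_k -> int * int) : Prop :=
  forall w : int * int, exists c : 'I_k -> int,
    w.1 = \sum_(i < k) c i * (u i).1 /\ w.2 = \sum_(i < k) c i * (u i).2.

Definition cyc_consec_indep (k : nat) (u : 'I_k -> int * int) : Prop :=
  forall i : 'I_k, det2 (u i) (u (ordS i)) != 0.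

Definition upper_half (k : nat) (u : 'I_k -> int * int) : Prop :=
  forall i : 'I_k, ((u i).2 == 0 /\ 0 < (u i).1) \/ 0 < (u i).2.

Definition first_horizontal (k : nat) (u : 'I_k -> int * int) : Prop :=
  forall i : 'I_k, nat_of_ord i = 0%N -> (u i).2 = 0 /\ 0 < (u i).1.

(* convexity: u_1,...,u_k (followed by -u_1,...,-u_k) are, in this order,
   the outward normals of a convex polygon, i.e. they turn strictly
   counterclockwise *)
Definition convex_seq (k : nat) (u : 'I_k -> int * int) : Prop :=
  forall i j : 'I_k, nat_of_ord j = (nat_of_ord i).+1 -> 0 < det2 (u i) (u j).

Definition vvec (k : nat) (u : 'I_k -> int * int) (i : 'I_k) : int * int :=
  (* ord_pred i is the cyclic predecessor: index k-1 (i.e. u_k) when i = 0 *)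
  if nat_of_ord i == 0%N then
    ((u i).1 + (u (ord_pred i)).1, (u i).2 + (u (ord_pred i)).2)
  else ((u i).1 - (u (ord_pred i)).1, (u i).2 - (u (ord_pred i)).2).

(* g = ker Omega, Omega(e_i) = v_i *)
Definition in_g {R : realType} (k : nat) (u : 'I_k -> int * int)
  (a : 'I_k -> R) : Prop :=
  \sum_(i < k) a i * ((vvec u i).1)%:~R = 0 /\
  \sum_(i < k) a i * ((vvec u i).2)%:~R = 0.

(* zeta_i = exp(i theta_i), 0 = theta_1 < ... < theta_k < 2 pi *)
Definition conformal_angles {R : realType} (k : nat) (theta : 'I_k -> R) : Prop :=
  (forall i : 'I_k, nat_of_ord i = 0%N -> theta i = 0) /\
  (forall i j : 'I_k, (i < j)%N -> theta i < theta j) /\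
  (forall i : 'I_k, 0 <= theta i < 2 * pi).

(* z_i = zeta_i^{1/2} = exp(i theta_i / 2) (arg in [0,pi));
   W = span{Re z, Im z} in (R^k)^*  *)
Definition in_W {R : realType} (k : nat) (theta : 'I_k -> R)
  (xi : 'I_k -> R) : Prop :=
  exists alpha beta : R, forall i : 'I_k,
    xi i = alpha * cos (theta i / 2) + beta * sin (theta i / 2).

(* B^* : (R^k)^* -> g^*, an element of g^* being a linear functional on g,
   represented by its values on elements of g; linear, with kernel W. *)
Definition Bstar_ok {R : realType} (k : nat) (u : 'I_k -> int * int)
  (theta : 'I_k -> R) (Bs : ('I_k -> R) -> ('I_k -> R) -> R) : Prop :=
  (forall xi (c : R) a b, in_g u a -> in_g u b ->
     Bs xi (fun i => c * a i + b i) = c * Bs xi a + Bs xi b) /\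
  (forall xi eta (c : R) a, in_g u a ->
     Bs (fun i => c * xi i + eta i) a = c * Bs xi a + Bs eta a) /\
  (forall xi, (forall a, in_g u a -> Bs xi a = 0) <-> in_W theta xi).

(* quaternion a + b i + c j + d k as (a,b,c,d) *)
Definition quat (R : realType) := (R * R * R * R)%type.

Definition qmul {R : realType} (p q : quat R) : quat R :=
  let: (a1, b1, c1, d1) := p in let: (a2, b2, c2, d2) := q in
  (a1*a2 - b1*b2 - c1*c2 - d1*d2,
   a1*b2 + b1*a2 + c1*d2 - d1*c2,
   a1*c2 - b1*d2 + c1*a2 + d1*b2,
   a1*d2 + b1*c2 - c1*b2 + d1*a2).

(* H^k as k x 4 real matrices: row m = real coordinates of q_m *)
Definition Hk (R : realType) (k : nat) := 'M[R]_(k, 4).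

Definition qrow {R : realType} {k : nat} (p : Hk R k) (m : 'I_k) : quat R :=
  (p m (inord 0), p m (inord 1), p m (inord 2), p m (inord 3)).

Definition qcoord {R : realType} (q : quat R) (c : 'I_4) : R :=
  let: (a, b, c', d) := q in
  if nat_of_ord c == 0%N then a else if nat_of_ord c == 1%N then b
  else if nat_of_ord c == 2%N then c' else d.

Definition mkH {R : realType} {k : nat} (f : 'I_k -> quat R) : Hk R k :=
  \matrix_(m < k, c < 4) qcoord (f m) c.

(* q_m = x_m + y_m j with x_m = a + b i, y_m = c + d i (q_m = a+bi+cj+dk).
   nu_m = (|x|^2 - |y|^2, Re(2 i x y), Im(2 i x y)); here x y = (ac-bd)+(ad+bc)i *)
Definition nu1 {R : realType} (q : quat R) : R :=
  let: (a, b, c, d) := q in a^+2 + b^+2 - c^+2 - d^+2.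
Definition nu2 {R : realType} (q : quat R) : R :=
  let: (a, b, c, d) := q in - (2 * (a*d + b*c)).
Definition nu3 {R : realType} (q : quat R) : R :=
  let: (a, b, c, d) := q in 2 * (a*c - b*d).

Definition mu1 {R : realType} {k : nat} (Bs : ('I_k -> R) -> ('I_k -> R) -> R)
  (p : Hk R k) (a : 'I_k -> R) : R := Bs (fun m => nu1 (qrow p m)) a.
Definition mu2 {R : realType} {k : nat} (Bs : ('I_k -> R) -> ('I_k -> R) -> R)
  (p : Hk R k) (a : 'I_k -> R) : R := Bs (fun m => nu2 (qrow p m)) a.
Definition mu3 {R : realType} {k : nat} (Bs : ('I_k -> R) -> ('I_k -> R) -> R)
  (p : Hk R k) (a : 'I_k -> R) : R := Bs (fun m => nu3 (qrow p m)) a.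

(* p in mu_R^{-1}(0) \ {0} (p a representative in H^k of a point of H^k/{+-1}) *)
Definition in_P {R : realType} {k : nat} (u : 'I_k -> int * int)
  (Bs : ('I_k -> R) -> ('I_k -> R) -> R) (p : Hk R k) : Prop :=
  p != 0 /\ forall a, in_g u a -> mu1 Bs p a = 0 /\ mu2 Bs p a = 0 /\ mu3 Bs p a = 0.

(* fundamental vector field of a in R^k (Lie algebra of T^k): the derivative at
   t = 0 of q_m |-> q_m exp(t a_m i), i.e. q_m |-> q_m (a_m i) *)
Definition Afield {R : realType} {k : nat} (p : Hk R k) (a : 'I_k -> R) : Hk R k :=
  mkH (fun m => qmul (qrow p m) (0, a m, 0, 0)).

Definition I1 {R : realType} {k : nat} (X : Hk R k) : Hk R k :=
  mkH (fun m => qmul (0, 1, 0, 0) (qrow X m)).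

Definition dirder {R : realType} {k : nat} (F : Hk R k -> R) (p X : Hk R k) : R :=
  derive1 (fun t : R => F (p + t *: X)) 0.

(* (I_1 dF)_p(X) := dF_p(I_1 X) (transpose action of I_1 on 1-forms) *)
Definition I1d {R : realType} {k : nat} (F : Hk R k -> R) (p X : Hk R k) : R :=
  dirder F p (I1 X).

From HB Require Import structures.
From mathcomp Require Import all_boot all_order all_algebra.
From mathcomp Require Import all_classical all_reals all_analysis.
From mathcomp Require Import ring lra zify.
Import Order.TTheory GRing.Theory Num.Theory.
Import numFieldNormedType.Exports.
Set Implicit Arguments. Unset Strict Implicit. Unset Printing Implicit Defensive.
Local Open Scope ring_scope.

(* Suppose [a <> 0] lies in [g] and [(I_1 d<mu_1, a'>)(A(a))] vanishes for every [a'] in [g].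
   That derivative is [B^*] of the vector [-2 a_m |q_m|^2] paired with [a'], so
   [a_m |q_m|^2 = l . w_m] with [w_m = (cos (theta_m / 2), sin (theta_m / 2))]. As [p] lies in [P],
   the three components of [nu(p)] lie in [W] too, so [|q_m|^4 = |nu_m|^2 = Q(w_m)] for a positive
   semidefinite quadratic form [Q].
   Extend [a] antiperiodically by [a_k = - a_0] and set [c_n = a_n - a_(n+1)]; then [a] lies in [g]
   iff [sum_n c_n u_n = 0]. By convexity [u_0, ..., u_k = - u_0] turns counterclockwise through a
   half turn, and so does [w_0, ..., w_k = - w_0]. A vanishing combination of the vectors of a half
   turn has a sign pattern [+,-,+] or [-,+,-] among its coefficients (otherwise a line separates
   the vectors with positive coefficients from those with negative ones). But [c] has no such
   pattern: if [Q] is definite, the points [w_m / |q_m|^2] lie on an ellipse, their successive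
   chords again turn counterclockwise and [c_n] is a linear function of the [n]-th chord; if [Q]
   has rank one, [|q_m|^2 = |r . w_m|] and a direct analysis of the signs of [r . w_m] applies.
   Hence [c = 0], and antiperiodicity forces [a = 0]. *)

(** * Half turns *)

Section HalfTurn.
Variable R : realFieldType.

Definition cross (w1 w2 : nat -> R) (i j : nat) : R := w1 i * w2 j - w2 i * w1 j.

Definition half_turn (K : nat) (w1 w2 : nat -> R) : Prop :=
  [/\ w1 K = - w1 0%N, w2 K = - w2 0%N &
      forall i j, (i < j <= K)%N -> (i, j) != (0%N, K) -> 0 < cross w1 w2 i j].

Lemma upper_half_ccw K (w1 w2 : nat -> R) :
  0 <= w2 0%N -> (forall n, (0 < n < K)%N -> 0 < w2 n) ->
  (forall n, (n.+1 < K)%N -> 0 < cross w1 w2 n n.+1) ->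
  forall i j, (i < j < K)%N -> 0 < cross w1 w2 i j.
Proof.
move=> w0 wpos consec i j /andP[ij]; elim: j ij => [//|j IH] ij jK.
have [->|ne] := eqVneq i j; first exact: consec.
have ij' : (i < j)%N by rewrite ltn_neqAle ne -ltnS ij.
have h1 := IH ij' (ltnW jK); have h2 := consec j jK.
have wj : 0 < w2 j by apply: wpos; lia.
have wj1 : 0 < w2 j.+1 by apply: wpos; lia.
have wi : 0 <= w2 i by case: (posnP i) => [->|i0] //; apply/ltW/wpos; lia.
have plucker : cross w1 w2 i j.+1 * w2 j =
    cross w1 w2 i j * w2 j.+1 + cross w1 w2 j j.+1 * w2 i by rewrite /cross; ring.
have : 0 < cross w1 w2 i j * w2 j.+1 + cross w1 w2 j j.+1 * w2 i.
  by rewrite ltr_pwDl ?mulr_gt0 ?mulr_ge0 // ltW.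
by rewrite -plucker pmulr_lgt0.
Qed.

Lemma half_turn_cross_ge0 K (w1 w2 : nat -> R) i j :
  half_turn K w1 w2 -> (i <= j <= K)%N -> 0 <= cross w1 w2 i j.
Proof.
move=> [w1K w2K ccw] /andP[ij jK].
have [<-|ne] := eqVneq i j; first by rewrite /cross mulrC subrr.
have [[-> ->]|] := eqVneq (i, j) (0%N, K).
  by rewrite /cross w1K w2K; lra.
by move=> /(ccw i j) h; apply/ltW/h; rewrite ltn_neqAle ne ij jK.
Qed.

Lemma half_turn_cross_gt0 K (w1 w2 : nat -> R) i j :
  half_turn K w1 w2 -> (i < j < K)%N -> 0 < cross w1 w2 i j.
Proof.
move=> [_ _ ccw] /andP[ij jK]; apply: ccw; first by rewrite ij ltnW.
by apply/eqP => -[_ jE]; rewrite jE ltnn in jK.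
Qed.

Definition alternates (K : nat) (c : nat -> R) : Prop :=
  exists m n p, [/\ (m < n < p)%N, (p < K)%N & [/\ 0 < c m, c n < 0 & 0 < c p]].

Lemma alternates_gt2 K (c : nat -> R) : alternates K c -> (2 < K)%N.
Proof. by move=> [m [n [p [/andP[mn np] pK _]]]]; lia. Qed.

Lemma eq_alternates K (c c' : nat -> R) :
  (forall n, (n < K)%N -> c n = c' n) -> alternates K c -> alternates K c'.
Proof.
move=> cc' [m [n [p [/andP[mn np] pK [cm cn cp]]]]]; exists m, n, p.
by rewrite -!cc' ?mn ?np //; lia.
Qed.

Lemma not_alternates_of_support2 K (c : nat -> R) j j' :
  (forall i, (i < K)%N -> c i != 0 -> i = j \/ i = j') -> ~ alternates K c.
Proof.
move=> supp [m [n [p [/andP[mn np] pK [cm cn cp]]]]].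
have := supp m ltac:(lia) (lt0r_neq0 cm); have := supp n ltac:(lia) (ltr0_neq0 cn).
have := supp p pK (lt0r_neq0 cp); lia.
Qed.

Lemma not_alternates_of_split_signs K (c : nat -> R) j (sigma : R) :
  (forall i, (i < K)%N -> i != j -> c i != 0 ->
     0 < c i * (if (i < j)%N then sigma else - sigma)) ->
  ~ alternates K c.
Proof.
move=> signs [m [n [p [/andP[mn np] pK [cm cn cp]]]]].
have below i : (i < j)%N -> (i < K)%N -> c i != 0 -> 0 < c i * sigma.
  by move=> ij iK ci; have := signs i iK (negbT (ltn_eqF ij)) ci; rewrite ij.
have above i : (j < i)%N -> (i < K)%N -> c i != 0 -> c i * sigma < 0.
  move=> ji iK ci; have := signs i iK (negbT (gtn_eqF ji)) ci.
  by rewrite ltnNge (ltnW ji) mulrN oppr_gt0.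
have mK : (m < K)%N by lia.
have nK : (n < K)%N by lia.
have [nj|jn|nj] := ltngtP n j.
- have := below m (ltn_trans mn nj) mK (lt0r_neq0 cm).
  have := below n nj nK (ltr0_neq0 cn).
  by rewrite (pmulr_rgt0 _ cm) (nmulr_rgt0 _ cn); lra.
- have := above n jn nK (ltr0_neq0 cn).
  have := above p (ltn_trans jn np) pK (lt0r_neq0 cp).
  by rewrite (nmulr_rlt0 _ cn) (pmulr_rlt0 _ cp); lra.
move: mn np; rewrite nj => mj jp.
have := below m mj mK (lt0r_neq0 cm); have := above p jp pK (lt0r_neq0 cp).
by rewrite (pmulr_rgt0 _ cm) (pmulr_rlt0 _ cp); lra.
Qed.

Lemma linear_pos_between (e1 e2 : nat -> R) (l1 l2 : R) m n p :
  0 < cross e1 e2 m n -> 0 < cross e1 e2 n p -> 0 <= cross e1 e2 m p ->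
  0 < l1 * e1 m + l2 * e2 m -> 0 <= l1 * e1 p + l2 * e2 p ->
  0 < l1 * e1 n + l2 * e2 n.
Proof.
move=> dmn dnp dmp fm fp.
have plucker : cross e1 e2 m p * (l1 * e1 n + l2 * e2 n) =
    cross e1 e2 n p * (l1 * e1 m + l2 * e2 m) + cross e1 e2 m n * (l1 * e1 p + l2 * e2 p).
  by rewrite /cross; ring.
have : 0 < cross e1 e2 m p * (l1 * e1 n + l2 * e2 n).
  by rewrite plucker ltr_pwDl ?mulr_gt0 ?mulr_ge0 // ltW.
by nra.
Qed.

Lemma linear_not_alternates K (e1 e2 : nat -> R) (l1 l2 : R) :
  (forall m p, (m < p < K)%N -> 0 < cross e1 e2 m p) ->
  ~ alternates K (fun n => l1 * e1 n + l2 * e2 n).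
Proof.
move=> ccw [m [n [p [/andP[mn np] pK [/= fm fn fp]]]]].
have dmn := ccw m n ltac:(lia); have dnp := ccw n p ltac:(lia).
have dmp := ltW (ccw m p ltac:(lia)).
by have := linear_pos_between dmn dnp dmp fm (ltW fp); lra.
Qed.

Lemma half_turn_separating_line K (u1 u2 : nat -> R) j :
  half_turn K u1 u2 -> (1 < K)%N -> (j < K)%N ->
  (forall n, (n <= j)%N -> 0 < cross u1 u2 n j + cross u1 u2 n j.+1) /\
  (forall n, (j < n < K)%N -> cross u1 u2 n j + cross u1 u2 n j.+1 < 0).
Proof.
move=> hu K1 jK; have [_ _ ccw] := hu.
have anti i i' : cross u1 u2 i i' = - cross u1 u2 i' i by rewrite /cross; ring.
split=> n.
  rewrite leq_eqVlt => /orP[/eqP ->|nj].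
    rewrite {1}/cross mulrC subrr add0r; apply: ccw; first by rewrite leqnn jK.
    by apply/eqP => -[j0 KE]; move: K1; rewrite -KE j0.
  have h1 : 0 < cross u1 u2 n j by apply: half_turn_cross_gt0 hu _; rewrite nj jK.
  have h2 : 0 <= cross u1 u2 n j.+1 by apply: half_turn_cross_ge0 hu _; lia.
  lra.
move=> /andP[jn nK].
have h1 : cross u1 u2 n j < 0 by rewrite anti oppr_lt0; apply: half_turn_cross_gt0 hu _; lia.
have cross_diag i : cross u1 u2 i i = 0 by rewrite /cross mulrC subrr.
have [nE|ne] := eqVneq n j.+1; first by rewrite nE cross_diag addr0 -nE.
have : 0 < cross u1 u2 j.+1 n by apply: half_turn_cross_gt0 hu _; lia.
rewrite (anti j.+1) oppr_gt0; lra.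
Qed.

Lemma half_turn_combination_neq0 K (u1 u2 c : nat -> R) i0 :
  half_turn K u1 u2 -> (1 < K)%N -> ~ alternates K c ->
  \sum_(n < K) c n * u1 n = 0 -> \sum_(n < K) c n * u2 n = 0 ->
  (i0 < K)%N -> 0 < c i0 -> (forall n, (n < i0)%N -> c n = 0) -> False.
Proof.
move=> hu K1 noalt S1 S2 i0K ci0 before.
have exP : exists j, (j < K)%N && (0 < c j) by exists i0; rewrite i0K ci0.
have ub j : (j < K)%N && (0 < c j) -> (j <= K)%N by case/andP => /ltnW.
have [j /andP[jK cj] jmax] := ex_maxnP exP ub.
have i0j : (i0 <= j)%N by apply: jmax; rewrite i0K ci0.
have c_ge0 n : (n <= j)%N -> 0 <= c n.
  move=> nj; rewrite leNgt; apply/negP => cn.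
  have [ni0|i0n] := ltnP n i0; first by move: cn; rewrite before ?ltxx.
  have [nE|ne] := eqVneq n i0; first by move: cn; rewrite nE; lra.
  have [nE|ne'] := eqVneq n j; first by move: cn; rewrite nE; lra.
  by apply: noalt; exists i0, n, j; split => //; lia.
have c_le0 n : (j < n < K)%N -> c n <= 0.
  move=> /andP[jn nK]; rewrite leNgt; apply/negP => cn.
  by have := jmax n; rewrite nK cn => /(_ isT); lia.
have [mu_pos mu_neg] := half_turn_separating_line hu K1 jK.
pose mu n := cross u1 u2 n j + cross u1 u2 n j.+1.
have terms_ge0 (n : 'I_K) : true -> 0 <= c n * mu n.
  move=> _; have [nj|jn] := leqP n j.
    by apply: mulr_ge0; [exact: c_ge0 | exact/ltW/mu_pos].
  by apply: mulr_le0; [apply: c_le0 | apply/ltW/mu_neg]; rewrite jn ltn_ord.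
have sum_eq0 : \sum_(n < K) c n * mu n = 0.
  have -> : \sum_(n < K) c n * mu n =
      (\sum_(n < K) c n * u1 n) * (u2 j + u2 j.+1) - (\sum_(n < K) c n * u2 n) * (u1 j + u1 j.+1).
    by rewrite !big_distrl -sumrB; apply: eq_bigr => n _; rewrite /mu /cross /=; ring.
  by rewrite S1 S2 !mul0r subrr.
have /(_ (Ordinal i0K) isT) /= := psumr_eq0P terms_ge0 sum_eq0.
by move/eqP; rewrite mulf_eq0 gt_eqF //= gt_eqF // mu_pos.
Qed.

Lemma half_turn_combination_eq0 K (u1 u2 c : nat -> R) :
  half_turn K u1 u2 -> u1 0%N != 0 ->
  ~ alternates K c -> ~ alternates K (fun n => - c n) ->
  \sum_(n < K) c n * u1 n = 0 -> \sum_(n < K) c n * u2 n = 0 ->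
  forall n, (n < K)%N -> c n = 0.
Proof.
move=> hu u10 noalt noaltN S1 S2 n nK; apply/eqP/negPn/negP => cn.
have [K1|K1] := leqP K 1.
  have n0 : n = 0%N by lia.
  have K1' : K = 1%N by lia.
  move: S1 cn; rewrite K1' n0 big_ord1 => /eqP; rewrite mulf_eq0 (negbTE u10) orbF.
  by move=> ->.
have exP : exists i, (i < K)%N && (c i != 0) by exists n; rewrite nK cn.
have [i0 /andP[i0K ci0] i0min] := ex_minnP exP.
have before m : (m < i0)%N -> c m = 0.
  move=> mi0; apply/eqP/negPn/negP => cm.
  by have := i0min m; rewrite cm (ltn_trans mi0 i0K) => /(_ isT); lia.
have [cpos|cneg] := ltP 0 (c i0).
  exact: half_turn_combination_neq0 hu K1 noalt S1 S2 i0K cpos before.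
apply: (half_turn_combination_neq0 (c := fun n => - c n) hu K1 _ _ _ i0K).
- by move=> [m [n' [p [mnp pK [a b d]]]]]; apply: noaltN; exists m, n', p.
- by rewrite (eq_bigr (fun i : 'I_K => - (c i * u1 i))) ?sumrN ?S1 ?oppr0 // => i _; rewrite mulNr.
- by rewrite (eq_bigr (fun i : 'I_K => - (c i * u2 i))) ?sumrN ?S2 ?oppr0 // => i _; rewrite mulNr.
- by rewrite oppr_gt0 lt_neqAle ci0 cneg.
- by move=> m /before ->; rewrite oppr0.
Qed.

Lemma half_turn_partner K (w1 w2 : nat -> R) n :
  half_turn K w1 w2 -> (1 < K)%N -> (n <= K)%N ->
  exists2 j, (j <= K)%N & cross w1 w2 n j != 0.
Proof.
move=> hw K1 nK; have [_ _ ccw] := hw.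
have anti j : cross w1 w2 n j = - cross w1 w2 j n by rewrite /cross; ring.
have [n0|n0] := eqVneq n 0%N.
  exists 1%N; first exact: ltnW.
  by rewrite n0 lt0r_neq0 // (half_turn_cross_gt0 hw) // K1.
have [nE|nK'] := eqVneq n K.
  exists 1%N; first exact: ltnW.
  rewrite anti oppr_eq0 lt0r_neq0 // nE; apply: ccw; first by rewrite K1 leqnn.
  by apply/eqP => -[].
exists 0%N => //; rewrite anti oppr_eq0 lt0r_neq0 // (half_turn_cross_gt0 hw) //.
by rewrite lt0n n0 ltn_neqAle nK' nK.
Qed.

Lemma half_turn_neq0 K (w1 w2 : nat -> R) n :
  half_turn K w1 w2 -> (1 < K)%N -> (n <= K)%N -> (w1 n, w2 n) != (0, 0).
Proof.
move=> hw K1 nK; have [j _] := half_turn_partner hw K1 nK.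
by apply: contra => /eqP[w1n w2n]; rewrite /cross w1n w2n !mul0r subrr.
Qed.

Lemma half_turn_scale K (w1 w2 X : nat -> R) :
  half_turn K w1 w2 -> (forall n, (n <= K)%N -> 0 < X n) -> X K = X 0%N ->
  half_turn K (fun n => w1 n / X n) (fun n => w2 n / X n).
Proof.
move=> [w1K w2K ccw] Xpos XK; split; rewrite ?XK ?w1K ?w2K ?mulNr //.
move=> i j /andP[ij jK] ijK.
have scaled : cross (fun n => w1 n / X n) (fun n => w2 n / X n) i j =
    cross w1 w2 i j / (X i * X j) by rewrite /cross; field; rewrite !gt_eqF ?Xpos //; lia.
by rewrite scaled divr_gt0 ?mulr_gt0 ?ccw ?Xpos ?ij //; lia.
Qed.

(** * Conics *)

Section QuadraticForm.
Variables G11 G12 G22 : R.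

Definition qform (z1 z2 : R) := G11 * z1 ^+ 2 + 2 * G12 * z1 * z2 + G22 * z2 ^+ 2.

Definition qpolar (a1 a2 b1 b2 : R) :=
  G11 * a1 * b1 + G12 * (a1 * b2 + a2 * b1) + G22 * a2 * b2.

Let disc := G11 * G22 - G12 ^+ 2.

Lemma qform_completed_square z1 z2 :
  G11 * qform z1 z2 = (G11 * z1 + G12 * z2) ^+ 2 + disc * z2 ^+ 2.
Proof. by rewrite /qform /disc; ring. Qed.

Lemma qform_ge0 z1 z2 : 0 < G11 -> 0 <= disc -> 0 <= qform z1 z2.
Proof.
move=> G11pos discpos; have := qform_completed_square z1 z2.
have := sqr_ge0 (G11 * z1 + G12 * z2); have := mulr_ge0 discpos (sqr_ge0 z2).
by nra.
Qed.

Lemma qform_gt0 z1 z2 : 0 < G11 -> 0 < disc -> (z1, z2) != (0, 0) -> 0 < qform z1 z2.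
Proof.
move=> G11pos discpos z_neq0; rewrite lt_def qform_ge0 ?ltW // andbT.
apply: contra z_neq0 => /eqP Q0; have := qform_completed_square z1 z2.
rewrite Q0 mulr0 => /esym/eqP; rewrite paddr_eq0 ?sqr_ge0 ?(mulr_ge0 (ltW discpos)) ?sqr_ge0 //.
rewrite sqrf_eq0 mulf_eq0 (gt_eqF discpos) sqrf_eq0 /= => /andP[/eqP h /eqP z2_0].
by move: h; rewrite z2_0 mulr0 addr0 => /eqP; rewrite mulf_eq0 (gt_eqF G11pos) /= => /eqP ->.
Qed.

(* For a chord of the conic [qform = 1], the midpoint [a] and the direction [c] are conjugate:
   [qpolar a c = 0]. *)
Lemma conjugate_cross_identity a1 a2 b1 b2 c1 c2 d1 d2 :
  qpolar a1 a2 c1 c2 = 0 -> qpolar b1 b2 d1 d2 = 0 ->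
  qform a1 a2 * qform b1 b2 * (c1 * d2 - c2 * d1) =
  disc * (a1 * c2 - a2 * c1) * (b1 * d2 - b2 * d1) * (a1 * b2 - a2 * b1).
Proof.
move=> ac bd.
have rot1 z1 z2 x1 x2 : qform z1 z2 * x1 =
    (z1 * x2 - z2 * x1) * - (G12 * z1 + G22 * z2) + qpolar z1 z2 x1 x2 * z1.
  by rewrite /qform /qpolar; ring.
have rot2 z1 z2 x1 x2 : qform z1 z2 * x2 =
    (z1 * x2 - z2 * x1) * (G11 * z1 + G12 * z2) + qpolar z1 z2 x1 x2 * z2.
  by rewrite /qform /qpolar; ring.
have -> : qform a1 a2 * qform b1 b2 * (c1 * d2 - c2 * d1) =
    (qform a1 a2 * c1) * (qform b1 b2 * d2) - (qform a1 a2 * c2) * (qform b1 b2 * d1) by ring.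
by rewrite (rot1 a1 a2 c1 c2) (rot2 b1 b2 d1 d2) (rot2 a1 a2 c1 c2) (rot1 b1 b2 d1 d2) ac bd
  /disc; ring.
Qed.

Lemma ellipse_chords_ccw K (y1 y2 : nat -> R) :
  0 < G11 -> 0 < disc -> half_turn K y1 y2 ->
  (forall n, (n <= K)%N -> qform (y1 n) (y2 n) = 1) ->
  forall i j, (i < j < K)%N ->
  0 < cross (fun n => y1 n - y1 n.+1) (fun n => y2 n - y2 n.+1) i j.
Proof.
move=> G11pos discpos hy on_ellipse i j /andP[ij jK].
pose s1 n := y1 n + y1 n.+1; pose s2 n := y2 n + y2 n.+1.
pose e1 n := y1 n - y1 n.+1; pose e2 n := y2 n - y2 n.+1.
have conj n : (n < K)%N -> qpolar (s1 n) (s2 n) (e1 n) (e2 n) = 0.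
  move=> nK; have -> : qpolar (s1 n) (s2 n) (e1 n) (e2 n) =
      qform (y1 n) (y2 n) - qform (y1 n.+1) (y2 n.+1) by rewrite /qpolar /qform /s1 /s2 /e1 /e2; ring.
  by rewrite !on_ellipse ?subrr // ltnW.
have turn n : (n < K)%N -> s1 n * e2 n - s2 n * e1 n < 0.
  move=> nK; have [_ _ ccw] := hy.
  have : 0 < cross y1 y2 n n.+1 by apply: ccw; rewrite ?ltnSn ?nK //; apply/eqP => -[]; lia.
  by rewrite /s1 /s2 /e1 /e2 /cross; lra.
have mid : 0 < s1 i * s2 j - s2 i * s1 j.
  have h1 : 0 < cross y1 y2 i j by apply: half_turn_cross_gt0 hy _; rewrite ij jK.
  have h2 : 0 <= cross y1 y2 i j.+1 by apply: half_turn_cross_ge0 hy _; lia.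
  have h3 : 0 <= cross y1 y2 i.+1 j by apply: half_turn_cross_ge0 hy _; lia.
  have h4 : 0 <= cross y1 y2 i.+1 j.+1 by apply: half_turn_cross_ge0 hy _; lia.
  by move: h1 h2 h3 h4; rewrite /s1 /s2 /cross; lra.
have := conjugate_cross_identity (conj i (ltn_trans ij jK)) (conj j jK).
have := turn i (ltn_trans ij jK); have := turn j jK.
have := qform_ge0 (s1 i) (s2 i) G11pos (ltW discpos).
have := qform_ge0 (s1 j) (s2 j) G11pos (ltW discpos).
rewrite /cross -/(e1 i) -/(e2 j) -/(e2 i) -/(e1 j).
move: (qform (s1 i) (s2 i)) (qform (s1 j) (s2 j)) => qi qj qj0 qi0 tj ti E.
have : 0 < qi * qj * (e1 i * e2 j - e2 i * e1 j).
  by rewrite E -(mulrA disc) mulr_gt0 // mulr_gt0 // nmulr_rgt0.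
by have := mulr_ge0 qi0 qj0; move: (qi * qj) => q; nra.
Qed.

Lemma pd_not_alternates K (w1 w2 A X : nat -> R) l1 l2 :
  0 <= G11 -> 0 < disc -> half_turn K w1 w2 ->
  (forall n, (n <= K)%N -> 0 <= X n /\ X n ^+ 2 = qform (w1 n) (w2 n)) ->
  (forall n, (n <= K)%N -> A n * X n = l1 * w1 n + l2 * w2 n) ->
  ~ alternates K (fun n => A n - A n.+1).
Proof.
move=> G11ge0 discpos hw hX hA alt.
have K1 : (1 < K)%N by have := alternates_gt2 alt; lia.
have G11pos : 0 < G11.
  rewrite lt_def G11ge0 andbT; apply/eqP => G11_0.
  by move: discpos; rewrite /disc G11_0 mul0r sub0r oppr_gt0; have := sqr_ge0 G12; lra.
have Xpos n : (n <= K)%N -> 0 < X n.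
  move=> nK; have [X0 XE] := hX n nK; rewrite lt_def X0 andbT.
  apply: contraTneq (qform_gt0 G11pos discpos (half_turn_neq0 hw K1 nK)) => Xn0.
  by rewrite -XE Xn0 expr0n ltxx.
have XK : X K = X 0.
  have [XK0 XKE] := hX K (leqnn K); have [X00 X0E] := hX 0%N (leq0n K).
  have [w1K w2K _] := hw.
  apply/eqP; rewrite -(@eqrXn2 _ 2) // XKE X0E w1K w2K; apply/eqP; rewrite /qform; ring.
pose y1 n := w1 n / X n; pose y2 n := w2 n / X n.
have on_ellipse n : (n <= K)%N -> qform (y1 n) (y2 n) = 1.
  move=> nK; have [_ XE] := hX n nK; have Xn := lt0r_neq0 (Xpos n nK).
  have -> : qform (y1 n) (y2 n) = qform (w1 n) (w2 n) / X n ^+ 2.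
    by rewrite /qform /y1 /y2; field.
  by rewrite -XE divff // expf_neq0.
have chords := ellipse_chords_ccw G11pos discpos (half_turn_scale hw Xpos XK) on_ellipse.
apply: (linear_not_alternates (l1 := l1) (l2 := l2) chords).
apply: eq_alternates alt => n nK /=.
have Xn := lt0r_neq0 (Xpos n (ltnW nK)); have Xn1 := lt0r_neq0 (Xpos n.+1 nK).
rewrite -[A n](mulfK Xn) -[A n.+1](mulfK Xn1) !hA ?(ltnW nK) //.
by rewrite /y1 /y2; ring.
Qed.

End QuadraticForm.

(** * Rank-one forms *)

Lemma normr_sign (s x : R) : s = 1 \/ s = -1 -> 0 <= s * x -> `|x| = s * x.
Proof.
by case=> ->; rewrite ?mul1r ?mulN1r => x0; [rewrite ger0_norm | rewrite ler0_norm // -oppr_ge0].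
Qed.

Section RankOne.
Variables (K : nat) (w1 w2 A : nat -> R) (r1 r2 l1 l2 : R).
Hypotheses (hw : half_turn K w1 w2) (K1 : (1 < K)%N) (r_neq0 : (r1, r2) != (0, 0)).
Let f n := r1 * w1 n + r2 * w2 n.
Hypothesis hA : forall n, (n <= K)%N -> A n * `|f n| = l1 * w1 n + l2 * w2 n.
Let D := l1 * r2 - l2 * r1.
Let c n := A n - A n.+1.

Lemma rank1_fK : f K = - f 0%N.
Proof. by have [w1K w2K _] := hw; rewrite /f w1K w2K; ring. Qed.

Lemma rank1_zero_unique i j :
  (i < j <= K)%N -> (i, j) != (0%N, K) -> f i = 0 -> f j = 0 -> False.
Proof.
move=> ijK ij fi fj; have [_ _ ccw] := hw; have d := ccw i j ijK ij.
have e1 : r1 * cross w1 w2 i j = f i * w2 j - f j * w2 i by rewrite /f /cross; ring.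
have e2 : r2 * cross w1 w2 i j = f j * w1 i - f i * w1 j by rewrite /f /cross; ring.
rewrite fi fj !mul0r subrr in e1 e2.
move: r_neq0; rewrite xpair_eqE.
move/eqP: e1; rewrite mulf_eq0 (gt_eqF d) orbF => ->.
by move/eqP: e2; rewrite mulf_eq0 (gt_eqF d) orbF => ->.
Qed.

Lemma rank1_D_eq0 z : (z <= K)%N -> f z = 0 -> D = 0.
Proof.
move=> zK fz; have [j jK dzj] := half_turn_partner hw K1 zK.
have lz : l1 * w1 z + l2 * w2 z = 0 by rewrite -hA // fz normr0 mulr0.
have : D * cross w1 w2 z j = (l1 * w1 z + l2 * w2 z) * f j - (l1 * w1 j + l2 * w2 j) * f z.
  by rewrite /D /f /cross; ring.
rewrite lz fz mul0r mulr0 subrr => /eqP; rewrite mulf_eq0 (negbTE dzj) orbF.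
by move/eqP.
Qed.

Lemma rank1_step i (t : R) : (i < K)%N ->
  `|f i| = t * f i -> `|f i.+1| = t * f i.+1 ->
  c i * (`|f i| * `|f i.+1|) = t * D * cross w1 w2 i i.+1.
Proof.
move=> iK fi fi1.
have -> : c i * (`|f i| * `|f i.+1|) =
    (A i * `|f i|) * `|f i.+1| - (A i.+1 * `|f i.+1|) * `|f i| by rewrite /c; ring.
by rewrite !hA ?(ltnW iK) // fi fi1 /D /f /cross; ring.
Qed.

Lemma rank1_sign_start :
  exists s : R, [/\ s = 1 \/ s = -1, 0 <= s * f 0%N & f 0%N = 0 -> 0 < s * f 1].
Proof.
have [f0|f0|f0] := ltgtP (f 0%N) 0.
- exists (-1); split; [by right | by rewrite mulN1r oppr_ge0 ltW |].
  by move=> f00; move: f0; rewrite f00 ltxx.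
- exists 1; split; [by left | by rewrite mul1r ltW |].
  by move=> f00; move: f0; rewrite f00 ltxx.
have f1 : f 1 != 0.
  have ne : (0%N, 1%N) != (0%N, K) by apply/eqP => -[K1']; move: K1; rewrite -K1'.
  by apply/eqP => f1; apply: (rank1_zero_unique (i := 0) (j := 1) (ltnW K1) ne f0 f1).
have [f1p|f1n] := ltP 0 (f 1).
  by exists 1; split; [left | rewrite f0 mulr0 | rewrite mul1r].
exists (-1); split; [right | rewrite f0 mulr0 | rewrite mulN1r oppr_gt0] => //.
by rewrite lt_neqAle f1 f1n.
Qed.

Let sf (t : R) n : t * f n = (t * r1) * w1 n + (t * r2) * w2 n.
Proof. by rewrite /f; ring. Qed.

Definition rank1_switch (j : nat) (s : R) : Prop :=
  [/\ (j < K)%N, s = 1 \/ s = -1, 0 <= s * f 0%N /\ (f 0%N = 0 -> (0 < j)%N),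
      forall i, (0 < i <= j)%N -> 0 < s * f i &
      forall i, (j < i <= K)%N -> s * f i <= 0].

Lemma rank1_switch_exists : exists j s, rank1_switch j s.
Proof.
have [s [hs s0 s1]] := rank1_sign_start.
have exP : exists i, (0 < i <= K)%N && (s * f i <= 0).
  by exists K; rewrite leqnn (ltn_trans _ K1) //= rank1_fK mulrN oppr_le0.
have [i1 /andP[/andP[i1_0 i1K] fi1] i1min] := ex_minnP exP.
have j1 : i1.-1.+1 = i1 by rewrite prednK.
have before_pos i : (0 < i <= i1.-1)%N -> 0 < s * f i.
  move=> /andP[i0 ii1]; rewrite ltNge; apply/negP => fi.
  have iK : (i <= K)%N by lia.
  by have := i1min i; rewrite i0 iK fi => /(_ isT); lia.
have start : f 0%N = 0 -> (0 < i1.-1)%N.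
  by move=> f0; rewrite lt0n; apply/eqP => j0; move: (s1 f0) fi1; rewrite -j1 j0; lra.
exists i1.-1, s; split => //; first by lia.
move=> i /andP[ji iK]; rewrite leNgt; apply/negP => fi.
have [a [aj fa]] : exists a, (a <= i1.-1)%N /\ 0 < s * f a.
  have [j0|j_pos] := posnP i1.-1; last first.
    by exists i1.-1; split => //; apply: before_pos; rewrite j_pos leqnn.
  exists 0%N; split => //; rewrite lt_def s0 andbT mulf_eq0 negb_or.
  have -> : s != 0 by case: hs => ->; rewrite ?oppr_eq0 oner_eq0.
  by apply/eqP => /start; rewrite j0.
have [iE|ii1] := eqVneq i i1; first by move: fi fi1; rewrite iE; lra.
have d1 : 0 < cross w1 w2 a i1 by apply: half_turn_cross_gt0 hw _; lia.
have d2 : 0 <= cross w1 w2 a i by apply: half_turn_cross_ge0 hw _; lia.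
have d3 : 0 < cross w1 w2 i1 i.
  have [_ _ ccw] := hw; apply: ccw; first by lia.
  by apply/eqP => -[]; lia.
have := linear_pos_between (l1 := s * r1) (l2 := s * r2) d1 d3 d2.
by rewrite -!sf => /(_ fa (ltW fi)); lra.
Qed.

Section Switch.
Variables (j : nat) (s : R).
Hypothesis sw : rank1_switch j s.

Lemma rank1_switch_before i : (i <= j)%N -> 0 <= s * f i.
Proof.
have [_ _ [s0 _] before_pos _] := sw.
by case: i => [//|i] ij; apply/ltW/before_pos.
Qed.

Lemma rank1_zero_start : f 0%N = 0 -> j = K.-1.
Proof.
move=> f0; have [jK _ [_ start] before_pos after] := sw; have j0 := start f0.
suff : ~ (j.+1 < K)%N by lia.
move=> jK'.
have d1 : 0 < cross w1 w2 1 j.+1 by apply: half_turn_cross_gt0 hw _; lia.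
have d2 : 0 < cross w1 w2 j.+1 K.
  have [_ _ ccw] := hw; apply: ccw; first by lia.
  by apply/eqP => -[]; lia.
have d3 : 0 <= cross w1 w2 1 K by apply: half_turn_cross_ge0 hw _; lia.
have := linear_pos_between (l1 := s * r1) (l2 := s * r2) d1 d2 d3.
rewrite -!sf rank1_fK f0 oppr0 mulr0 before_pos ?j0 // => /(_ isT (lexx 0)).
by have := after j.+1; rewrite ltnSn /= ltnW // => /(_ isT); lra.
Qed.

Lemma rank1_zero_mid z : f 0%N != 0 -> (z <= K)%N -> f z = 0 -> z = j.+1.
Proof.
move=> f0 zK fz; have [jK hs _ before_pos after] := sw.
have s_neq0 : s != 0 by case: hs => ->; rewrite ?oppr_eq0 oner_eq0.
have z0 : z != 0%N by apply: contra f0 => /eqP <-; rewrite fz.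
have zK' : z != K by apply: contra f0 => /eqP zE; rewrite -oppr_eq0 -rank1_fK -zE fz.
have jz : (j < z)%N.
  rewrite ltnNge; apply/negP => zj.
  by have := before_pos z; rewrite lt0n z0 zj fz mulr0 ltxx => /(_ isT).
have [//|ne] := eqVneq z j.+1; exfalso.
have fj1 : - s * f j.+1 > 0.
  have fj1 : f j.+1 != 0.
    by apply/eqP => fj1; apply: (rank1_zero_unique (i := j.+1) (j := z)) => //; lia.
  rewrite mulNr oppr_gt0 lt_neqAle mulf_eq0 negb_or s_neq0 fj1 /=.
  by apply: after; rewrite ltnSn; lia.
have fz1 : 0 <= - s * f z.+1 by rewrite mulNr oppr_ge0; apply: after; lia.
have d1 : 0 < cross w1 w2 j.+1 z by apply: half_turn_cross_gt0 hw _; lia.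
have d2 : 0 < cross w1 w2 z z.+1.
  have [_ _ ccw] := hw; apply: ccw; first by lia.
  by apply/eqP => -[z0']; move: z0; rewrite z0'.
have d3 : 0 <= cross w1 w2 j.+1 z.+1 by apply: half_turn_cross_ge0 hw _; lia.
have := linear_pos_between (l1 := - s * r1) (l2 := - s * r2) d1 d2 d3.
by rewrite -!sf fz mulr0 ltxx => /(_ fj1 fz1).
Qed.

Lemma rank1_step_same_side i : (i < K)%N -> i != j ->
  c i * (`|f i| * `|f i.+1|) = (if (i < j)%N then s * D else - (s * D)) * cross w1 w2 i i.+1.
Proof.
move=> iK ij; have [jK hs _ _ after] := sw; case: ltnP => [ij'|ji].
  by rewrite (rank1_step (t := s) iK) //; apply: (normr_sign hs); apply: rank1_switch_before; lia.
have ji' : (j < i)%N by rewrite ltn_neqAle eq_sym ij ji.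
have hs' : - s = 1 \/ - s = -1 by case: hs => ->; [right | left; rewrite opprK].
rewrite (rank1_step (t := - s) iK); first by rewrite !mulNr.
  all: by apply: (normr_sign hs'); rewrite mulNr oppr_ge0; apply: after; lia.
Qed.

Lemma rank1_support2 z : (z <= K)%N -> f z = 0 ->
  exists j', forall i, (i < K)%N -> c i != 0 -> i = j \/ i = j'.
Proof.
move=> zK fz; have D0 := rank1_D_eq0 zK fz.
have supp i : (i < K)%N -> c i != 0 -> i = j \/ f i = 0 \/ f i.+1 = 0.
  move=> iK ci; have [->|ij] := eqVneq i j; first by left.
  move/eqP: (rank1_step_same_side iK ij); rewrite D0 mulr0 oppr0 if_same mul0r.
  rewrite mulf_eq0 (negbTE ci) /= mulf_eq0 !normr_eq0 => /orP[] /eqP; tauto.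
have [f0|f0] := eqVneq (f 0%N) 0.
  have jE := rank1_zero_start f0; exists 0%N => i iK /(supp i iK) [|[fi|fi1]]; first by left.
    have [->|i0] := posnP i; first by right.
    exfalso; apply: (rank1_zero_unique (i := 0) (j := i)) => //.
      by rewrite i0 ltnW.
    by apply/eqP => -[iE]; move: iK; rewrite iE ltnn.
  left; rewrite jE; have [iE|iK'] := eqVneq i.+1 K; first by rewrite -iE.
  by exfalso; apply: (rank1_zero_unique (i := 0) (j := i.+1)).
exists j.+1 => i iK /(supp i iK) [|[fi|fi1]]; first by left.
  by right; apply: rank1_zero_mid => //; exact: ltnW.
by left; have := rank1_zero_mid f0 iK fi1 => -[].
Qed.

Lemma rank1_signs : (forall z, (z <= K)%N -> f z != 0) ->
  forall i, (i < K)%N -> i != j -> c i != 0 ->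
  0 < c i * (if (i < j)%N then s * D else - (s * D)).
Proof.
move=> nz i iK ij ci; have E := rank1_step_same_side iK ij.
move: (if _ then _ else _) E => sigma E.
have P : 0 < `|f i| * `|f i.+1| by rewrite mulr_gt0 // normr_gt0 nz // ltnW.
have X : 0 < cross w1 w2 i i.+1.
  have [_ _ ccw] := hw; apply: ccw; first by rewrite ltnSn iK.
  by apply/eqP => -[i0 iK']; move: K1; rewrite -iK' i0.
have : 0 < c i * sigma * cross w1 w2 i i.+1.
  by rewrite -mulrA -E mulrA -expr2 mulr_gt0 // lt_def sqrf_eq0 ci sqr_ge0.
by rewrite pmulr_lgt0.
Qed.

End Switch.

Lemma rank1_not_alternates : ~ alternates K c.
Proof.
have [j [s sw]] := rank1_switch_exists.
have [/existsP[z /eqP fz]|nz] := boolP [exists z : 'I_K.+1, f z == 0].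
  have [j' supp] := rank1_support2 sw (ltn_ord z) fz.
  exact: not_alternates_of_support2 supp.
apply: (not_alternates_of_split_signs (j := j) (sigma := s * D)).
move=> i; apply: (rank1_signs sw) => z zK; apply: contra nz => fz.
by apply/existsP; exists (Ordinal (zK : (z < K.+1)%N)).
Qed.

End RankOne.

End HalfTurn.

Section SemidefiniteForms.
Variable R : rcfType.

Lemma psd_rank1_factor G11 G12 G22 : 0 <= G11 -> 0 <= G22 -> G12 ^+ 2 = G11 * G22 ->
  exists r1 r2 : R, forall z1 z2, qform G11 G12 G22 z1 z2 = (r1 * z1 + r2 * z2) ^+ 2.
Proof.
move=> G11ge0 G22ge0 disc0.
have [G11_0|G11_neq0] := eqVneq G11 0.
  have G12_0 : G12 = 0 by apply/eqP; rewrite -sqrf_eq0 disc0 G11_0 mul0r.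
  exists 0, (Num.sqrt G22) => z1 z2.
  have -> : (0 * z1 + Num.sqrt G22 * z2) ^+ 2 = Num.sqrt G22 ^+ 2 * z2 ^+ 2 by ring.
  by rewrite /qform G11_0 G12_0 sqr_sqrtr //; ring.
have sqrt_neq0 : Num.sqrt G11 != 0 by rewrite sqrtr_eq0 -ltNge lt_def G11_neq0.
exists (Num.sqrt G11), (G12 / Num.sqrt G11) => z1 z2.
have -> : (Num.sqrt G11 * z1 + G12 / Num.sqrt G11 * z2) ^+ 2 = Num.sqrt G11 ^+ 2 * z1 ^+ 2
    + 2 * G12 * z1 * z2 + G12 ^+ 2 / Num.sqrt G11 ^+ 2 * z2 ^+ 2 by field.
by rewrite sqr_sqrtr // disc0 /qform; field.
Qed.

Lemma psd_not_alternates K (w1 w2 A X : nat -> R) G11 G12 G22 l1 l2 :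
  0 <= G11 -> 0 <= G22 -> G12 ^+ 2 <= G11 * G22 -> half_turn K w1 w2 ->
  (forall n, (n <= K)%N -> 0 <= X n /\ X n ^+ 2 = qform G11 G12 G22 (w1 n) (w2 n)) ->
  (exists2 n, (n < K)%N & X n != 0) ->
  (forall n, (n <= K)%N -> A n * X n = l1 * w1 n + l2 * w2 n) ->
  ~ alternates K (fun n => A n - A n.+1).
Proof.
move=> G11ge0 G22ge0 GD hw hX [n0 n0K Xn0] hA alt.
have [discpos|disc0] := ltP 0 (G11 * G22 - G12 ^+ 2).
  exact: pd_not_alternates G11ge0 discpos hw hX hA alt.
have disc0' : G12 ^+ 2 = G11 * G22 by apply/eqP; rewrite eq_le GD -subr_le0 disc0.
have [r1 [r2 Q_sq]] := psd_rank1_factor G11ge0 G22ge0 disc0'.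
have X_abs n : (n <= K)%N -> X n = `|r1 * w1 n + r2 * w2 n|.
  move=> nK; have [X0 XE] := hX n nK.
  by apply/eqP; rewrite -(@eqrXn2 _ 2) ?normr_ge0 // XE Q_sq real_normK ?num_real.
have r_neq0 : (r1, r2) != (0, 0).
  apply: contra Xn0 => /eqP[r10 r20].
  by rewrite (X_abs n0 (ltnW n0K)) r10 r20 !mul0r addr0 normr0.
have K1 : (1 < K)%N by apply: ltnW (alternates_gt2 alt).
apply: rank1_not_alternates hw K1 r_neq0 _ alt.
by move=> n nK; rewrite -X_abs // hA.
Qed.

Lemma antiperiodic_eq0 K (u1 u2 w1 w2 A X : nat -> R) G11 G12 G22 l1 l2 :
  half_turn K u1 u2 -> u1 0%N != 0 -> half_turn K w1 w2 ->
  0 <= G11 -> 0 <= G22 -> G12 ^+ 2 <= G11 * G22 ->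
  (forall n, (n <= K)%N -> 0 <= X n /\ X n ^+ 2 = qform G11 G12 G22 (w1 n) (w2 n)) ->
  (exists2 n, (n < K)%N & X n != 0) ->
  (forall n, (n <= K)%N -> A n * X n = l1 * w1 n + l2 * w2 n) ->
  A K = - A 0%N ->
  \sum_(n < K) (A n - A n.+1) * u1 n = 0 -> \sum_(n < K) (A n - A n.+1) * u2 n = 0 ->
  forall n, (n < K)%N -> A n = 0.
Proof.
move=> hu u10 hw G11ge0 G22ge0 GD hX Xnz hA AK S1 S2.
have noalt := psd_not_alternates G11ge0 G22ge0 GD hw hX Xnz hA.
have noaltN : ~ alternates K (fun n => - (A n - A n.+1)).
  move=> alt; apply: (psd_not_alternates (A := fun n => - A n) (l1 := - l1) (l2 := - l2)
    G11ge0 G22ge0 GD hw hX Xnz) => [n nK|]; first by rewrite mulNr hA //; ring.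
  by apply: eq_alternates alt => n _ /=; ring.
have steps := half_turn_combination_eq0 hu u10 noalt noaltN S1 S2.
have A_const n : (n <= K)%N -> A n = A 0.
  elim: n => [//|n IH] nK; rewrite -IH ?(ltnW nK) //.
  by apply/eqP; rewrite -subr_eq0 -opprB oppr_eq0 steps.
move=> n nK; have := A_const K (leqnn K); rewrite AK (A_const n (ltnW nK)).
by lra.
Qed.

End SemidefiniteForms.

(** * The moment map *)

Section Quaternions.
Variable R : realType.

Lemma qrow_mkH k (f : 'I_k -> quat R) m : qrow (mkH f) m = f m.
Proof.
rewrite /qrow /mkH !mxE; case: (f m) => [[[a b] c] d].
by rewrite /qcoord !inordK.
Qed.

Definition qnorm2 k (p : Hk R k) (m : 'I_k) : R :=
  p m (inord 0) ^+ 2 + p m (inord 1) ^+ 2 + p m (inord 2) ^+ 2 + p m (inord 3) ^+ 2.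

Lemma qnorm2_ge0 k (p : Hk R k) m : 0 <= qnorm2 p m.
Proof.
rewrite /qnorm2; have := sqr_ge0 (p m (inord 0)); have := sqr_ge0 (p m (inord 1)).
by have := sqr_ge0 (p m (inord 2)); have := sqr_ge0 (p m (inord 3)); lra.
Qed.

Lemma qnorm2_eq0 k (p : Hk R k) m : qnorm2 p m = 0 -> forall c, p m c = 0.
Proof.
rewrite /qnorm2 => h c.
have s0 := sqr_ge0 (p m (inord 0)); have s1 := sqr_ge0 (p m (inord 1)).
have s2 := sqr_ge0 (p m (inord 2)); have s3 := sqr_ge0 (p m (inord 3)).
have z j : (j < 4)%N -> p m (inord j) ^+ 2 = 0 by case: j => [|[|[|[|j]]]] // _; lra.
by have /eqP := z _ (ltn_ord c); rewrite inord_val sqrf_eq0 => /eqP.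
Qed.

Lemma qnorm2_nu k (p : Hk R k) m :
  qnorm2 p m ^+ 2 = nu1 (qrow p m) ^+ 2 + nu2 (qrow p m) ^+ 2 + nu3 (qrow p m) ^+ 2.
Proof. by rewrite /qnorm2 /qrow /nu1 /nu2 /nu3; ring. Qed.

Lemma derive1_quadratic_at0 (a b c : R) :
  derive1 (fun t : R => t * b + (t ^+ 2 * c + a)) 0 = b.
Proof.
have -> : (fun t : R => t * b + (t ^+ 2 * c + a)) = id * cst b + (id ^+ 2 * cst c + cst a).
  by apply/funext.
have did := @is_derive_id _ R 0 1; have dcst k := @is_derive_cst _ R R k 0 1.
rewrite derive1E (@derive_val _ _ _ _ _ _ _ (is_deriveD (is_deriveM did (dcst b))
  (is_deriveD (is_deriveM (is_deriveX 2 did) (dcst c)) (dcst a)))) /=.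
by rewrite !scaler0 !add0r expr1 mulr0 scale0r scaler0 !addr0 [LHS]mulr1.
Qed.

Lemma I1d_mu1_Afield k (u : 'I_k -> int * int) (theta : 'I_k -> R) Bs (p : Hk R k) a a' :
  Bstar_ok u theta Bs -> in_g u a' ->
  I1d (fun q => mu1 Bs q a') p (Afield p a) = Bs (fun m => -2 * (a m * qnorm2 p m)) a'.
Proof.
move=> [_ [Bs_lin _]] ga'.
pose Y := I1 (Afield p a).
have Y_coord m : [/\ Y m (inord 0) = - (p m (inord 0) * a m), Y m (inord 1) = - (p m (inord 1) * a m),
    Y m (inord 2) = p m (inord 2) * a m & Y m (inord 3) = p m (inord 3) * a m].
  have : qrow Y m = qmul (0, 1, 0, 0) (qmul (qrow p m) (0, a m, 0, 0)).
    by rewrite /Y /I1 qrow_mkH /Afield qrow_mkH.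
  by rewrite /qrow => -[-> -> -> ->] /=; split; ring.
have YE : I1 (Afield p a) = Y by [].
clearbody Y.
have expand t : mu1 Bs (p + t *: Y) a' = t * Bs (fun m => -2 * (a m * qnorm2 p m)) a' +
    (t ^+ 2 * Bs (fun m => nu1 (qrow Y m)) a' + Bs (fun m => nu1 (qrow p m)) a').
  rewrite /mu1 -!Bs_lin //; congr (Bs _ a'); apply/funext => m.
  have [y0 y1 y2 y3] := Y_coord m.
  by rewrite /qrow /nu1 /qnorm2 !mxE y0 y1 y2 y3; ring.
by rewrite /I1d /dirder YE; under eq_fun do rewrite expand; exact: derive1_quadratic_at0.
Qed.


(* Extends a sequence on ['I_k.+1] to the index [k.+1] by antiperiodicity, [x_(k+1) = - x_0];
   this closing step is what the twisted vector [v_1 = u_1 + u_k] encodes. *)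
Definition antiext k (f : 'I_k.+1 -> R) (n : nat) : R :=
  if (n < k.+1)%N then f (inord n) else - f (inord 0%N).

Lemma antiext_lt k (f : 'I_k.+1 -> R) n : (n < k.+1)%N -> antiext f n = f (inord n).
Proof. by rewrite /antiext => ->. Qed.

Lemma antiext_end k (f : 'I_k.+1 -> R) : antiext f k.+1 = - antiext f 0.
Proof. by rewrite /antiext ltnn ltn0Sn. Qed.

Lemma half_turn_lattice k (u : 'I_k.+1 -> int * int) :
  upper_half u -> first_horizontal u -> convex_seq u ->
  half_turn k.+1 (antiext (fun i => ((u i).1)%:~R : R)) (antiext (fun i => ((u i).2)%:~R)).
Proof.
move=> hup hfirst hconv.
set U1 := antiext _; set U2 := antiext _.
have [u20 u10] := hfirst (inord 0) (inordK (ltn0Sn k)).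
have det_cast (i j : 'I_k.+1) : ((det2 (u i) (u j))%:~R : R) =
    ((u i).1)%:~R * ((u j).2)%:~R - ((u i).2)%:~R * ((u j).1)%:~R.
  by rewrite /det2 rmorphB !rmorphM.
have U2_ge0 n : (n < k.+1)%N -> 0 <= U2 n.
  move=> nk; rewrite /U2 antiext_lt // ler0z.
  by case: (hup (inord n)) => [[/eqP -> _] | /ltW].
have consec n : (n.+1 < k.+1)%N -> 0 < cross U1 U2 n n.+1.
  move=> nk; have := hconv (inord n) (inord n.+1).
  rewrite !inordK ?(ltnW nk) // -(ltr0z R) det_cast => /(_ erefl) h.
  by rewrite /cross /U1 /U2 !antiext_lt ?(ltnW nk).
have U2_pos n : (0 < n < k.+1)%N -> 0 < U2 n.
  move=> /andP[n0 nk]; rewrite /U2 antiext_lt // ltr0z.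
  case: (hup (inord n)) => [[/eqP un2 un1] | //]; exfalso.
  have U2n : U2 n = 0 by rewrite /U2 antiext_lt //= un2.
  have U1n : 0 < U1 n by rewrite /U1 antiext_lt //= ltr0z.
  have := consec n.-1; rewrite prednK // => /(_ nk).
  rewrite /cross U2n mulr0 sub0r oppr_gt0 ltNge mulr_ge0 ?(ltW U1n) //.
  by apply: U2_ge0; lia.
have ccw := upper_half_ccw (U2_ge0 0%N isT) U2_pos consec.
split; [exact: antiext_end | exact: antiext_end | move=> i j /andP[ij jk] ijk].
have [jE|jk'] := eqVneq j k.+1; last by apply: ccw; rewrite ij ltn_neqAle jk' jk.
have i0 : (0 < i)%N by move: ijk; rewrite jE xpair_eqE eqxx andbT lt0n.
have U20 : U2 0 = 0 by rewrite /U2 antiext_lt //= u20.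
have [U1K U2K] : U1 k.+1 = - U1 0 /\ U2 k.+1 = - U2 0 by rewrite /U1 /U2 !antiext_end.
have := ccw 0%N i; rewrite i0 -jE ij => /(_ isT).
by rewrite /cross jE U1K U2K U20; lra.
Qed.


Lemma half_turn_angles k (theta : 'I_k.+1 -> R) : conformal_angles theta ->
  half_turn k.+1 (antiext (fun i => cos (theta i / 2))) (antiext (fun i => sin (theta i / 2))).
Proof.
move=> [theta0 [theta_incr theta_range]].
have t0 : theta (inord 0%N) = 0 by apply: theta0; rewrite inordK.
have sin_half_gt0 i j : (i < j)%N -> (j < k.+1)%N ->
    0 < sin (theta (inord j) / 2 - theta (inord i) / 2).
  move=> ij jk; have lt := theta_incr (inord i) (inord j).
  rewrite !inordK ?(ltn_trans ij jk) // in lt; have {}lt := lt ij.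
  have /andP[gi _] := theta_range (inord i); have /andP[_ gj] := theta_range (inord j).
  by apply: sin_gt0_pi; apply/andP; split; lra.
split; [exact: antiext_end | exact: antiext_end | move=> i j /andP[ij jk] ijk].
have [jE|jk'] := eqVneq j k.+1.
  have i0 : (0 < i)%N by move: ijk; rewrite jE xpair_eqE eqxx andbT lt0n.
  have ik : (i < k.+1)%N by rewrite -jE.
  rewrite /cross jE !antiext_end !antiext_lt //= t0 mul0r sin0 cos0.
  by have := sin_half_gt0 0%N i i0; rewrite -jE ij t0 mul0r subr0 => /(_ isT); lra.
have jk1 : (j < k.+1)%N by rewrite ltn_neqAle jk' jk.
rewrite /cross !antiext_lt ?(ltn_trans ij jk1) //=.
by have := sin_half_gt0 i j ij jk1; rewrite sinB; lra.
Qed.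

Lemma sum_antiperiodic_by_parts (A U : nat -> R) k : A k.+1 = - A 0 ->
  \sum_(n < k.+1) A n * (if (n : nat) == 0%N then U 0%N + U k else U n - U n.-1) =
  \sum_(n < k.+1) (A n - A n.+1) * U n.
Proof.
move=> AK; rewrite big_ord_recl /=.
rewrite (eq_bigr (fun n : 'I_k.+1 => A n * U n - A n.+1 * U n)) => [|n _]; last by ring.
rewrite sumrB big_ord_recl [X in _ = _ - X]big_ord_recr /= AK /bump.
under eq_bigr do rewrite leq0n add1n ?add0n mulrBr.
under [X in _ = _ + X - _]eq_bigr do rewrite leq0n add1n.
by rewrite sumrB; ring.
Qed.

Lemma ord_predE k (i : 'I_k.+1) : ord_pred i = inord (if (i : nat) == 0%N then k else i.-1).
Proof.
apply: val_inj => /=; case: i => [[|n] nk] /=; first by rewrite inordK // modn_small.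
by rewrite inordK ?addSn ?modnDr ?modn_small //; lia.
Qed.

Lemma in_g_by_parts k (u : 'I_k.+1 -> int * int) (a : 'I_k.+1 -> R) : in_g u a ->
  \sum_(n < k.+1) (antiext a n - antiext a n.+1) * antiext (fun i => ((u i).1)%:~R) n = 0 /\
  \sum_(n < k.+1) (antiext a n - antiext a n.+1) * antiext (fun i => ((u i).2)%:~R) n = 0.
Proof.
have by_parts (pr : int * int -> int) :
    (forall x y : int * int, pr (x.1 + y.1, x.2 + y.2) = pr x + pr y) ->
    (forall x y : int * int, pr (x.1 - y.1, x.2 - y.2) = pr x - pr y) ->
    \sum_(i < k.+1) a i * (pr (vvec u i))%:~R =
    \sum_(n < k.+1) (antiext a n - antiext a n.+1) * antiext (fun i => (pr (u i))%:~R) n.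
  move=> prD prB; rewrite -sum_antiperiodic_by_parts ?antiext_end //.
  apply: eq_bigr => i _; have ik := ltn_ord i.
  rewrite /vvec ord_predE !antiext_lt ?inord_val //=; last by lia.
  have [i0|i0] := eqVneq (i : nat) 0%N; last by rewrite prB rmorphB.
  have iE : i = inord 0%N by apply: val_inj; rewrite /= inordK // i0.
  by rewrite prD rmorphD -iE.
move=> [g1 g2]; split.
  by rewrite -(by_parts fst) // => -[? ?] [? ?].
by rewrite -(by_parts snd) // => -[? ?] [? ?].
Qed.


Lemma in_W_of_I1d_mu1_eq0 k (u : 'I_k -> int * int) theta Bs (p : Hk R k) a :
  Bstar_ok u theta Bs ->
  (forall a', in_g u a' -> I1d (fun q => mu1 Bs q a') p (Afield p a) = 0) ->
  in_W theta (fun m => a m * qnorm2 p m).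
Proof.
move=> hB vanish; have [_ [_ kerW]] := hB.
have [al [be xiW]] : in_W theta (fun m => -2 * (a m * qnorm2 p m)).
  by apply/kerW => a' ga'; rewrite -(I1d_mu1_Afield _ _ hB ga') vanish.
by exists (- al / 2), (- be / 2) => m; have := xiW m; lra.
Qed.

Lemma qnorm2_gram_of_in_P k (u : 'I_k -> int * int) theta Bs (p : Hk R k) :
  Bstar_ok u theta Bs -> in_P u Bs p ->
  exists G11 G12 G22 : R, [/\ 0 <= G11, 0 <= G22, G12 ^+ 2 <= G11 * G22 &
    forall m, qnorm2 p m ^+ 2 = qform G11 G12 G22 (cos (theta m / 2)) (sin (theta m / 2))].
Proof.
move=> [_ [_ kerW]] [_ p_mu].
have [a1 [b1 W1]] := (kerW _).1 (fun a' ga' => (p_mu a' ga').1).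
have [a2 [b2 W2]] := (kerW _).1 (fun a' ga' => (p_mu a' ga').2.1).
have [a3 [b3 W3]] := (kerW _).1 (fun a' ga' => (p_mu a' ga').2.2).
exists (a1 ^+ 2 + a2 ^+ 2 + a3 ^+ 2), (a1 * b1 + a2 * b2 + a3 * b3), (b1 ^+ 2 + b2 ^+ 2 + b3 ^+ 2).
split; first by have := sqr_ge0 a1; have := sqr_ge0 a2; have := sqr_ge0 a3; lra.
- by have := sqr_ge0 b1; have := sqr_ge0 b2; have := sqr_ge0 b3; lra.
- have lagrange : (a1 ^+ 2 + a2 ^+ 2 + a3 ^+ 2) * (b1 ^+ 2 + b2 ^+ 2 + b3 ^+ 2)
      - (a1 * b1 + a2 * b2 + a3 * b3) ^+ 2 =
      (a1 * b2 - a2 * b1) ^+ 2 + (a1 * b3 - a3 * b1) ^+ 2 + (a2 * b3 - a3 * b2) ^+ 2 by ring.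
  have := sqr_ge0 (a1 * b2 - a2 * b1); have := sqr_ge0 (a1 * b3 - a3 * b1).
  by have := sqr_ge0 (a2 * b3 - a3 * b2); lra.
by move=> m; rewrite qnorm2_nu W1 W2 W3 /qform; ring.
Qed.


Lemma in_g_in_W_eq0 k (u : 'I_k.+1 -> int * int) (theta : 'I_k.+1 -> R) (p : Hk R k.+1) a
    G11 G12 G22 :
  upper_half u -> first_horizontal u -> convex_seq u -> conformal_angles theta ->
  p != 0 -> in_g u a -> in_W theta (fun m => a m * qnorm2 p m) ->
  0 <= G11 -> 0 <= G22 -> G12 ^+ 2 <= G11 * G22 ->
  (forall m, qnorm2 p m ^+ 2 = qform G11 G12 G22 (cos (theta m / 2)) (sin (theta m / 2))) ->
  a = fun _ => 0.
Proof.
move=> hup hfirst hconv hang p_neq0 ga [l1 [l2 aXW]] G11ge0 G22ge0 GD gram.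
pose W1 := antiext (fun i => cos (theta i / 2)); pose W2 := antiext (fun i => sin (theta i / 2)).
pose X n := qnorm2 p (inord (n %% k.+1)).
have X_lt n : (n < k.+1)%N -> X n = qnorm2 p (inord n) by move=> nk; rewrite /X modn_small.
have XK : X k.+1 = X 0%N by rewrite /X modnn mod0n.
have hX n : (n <= k.+1)%N -> 0 <= X n /\ X n ^+ 2 = qform G11 G12 G22 (W1 n) (W2 n).
  move=> nk; split; first exact: qnorm2_ge0.
  have [nE|nk'] := eqVneq n k.+1; last first.
    by rewrite X_lt ?gram /W1 /W2 ?antiext_lt // ltn_neqAle nk' nk.
  by rewrite nE XK X_lt // gram /W1 /W2 !antiext_end !antiext_lt //= /qform; ring.
have hA n : (n <= k.+1)%N -> antiext a n * X n = l1 * W1 n + l2 * W2 n.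
  move=> nk; have [nE|nk'] := eqVneq n k.+1; last first.
    by rewrite X_lt ?aXW /W1 /W2 ?antiext_lt // ltn_neqAle nk' nk.
  rewrite nE XK X_lt // /W1 /W2 !antiext_end !antiext_lt //= mulNr aXW; ring.
have Xnz : exists2 n, (n < k.+1)%N & X n != 0.
  have [m [c pmc]] : exists m c, p m c != 0.
    apply: contrapT => p0; move/eqP: p_neq0; apply; apply/matrixP => m c; rewrite mxE.
    by apply: contrapT => pmc; apply: p0; exists m, c; apply/eqP.
  exists m => //; rewrite X_lt ?inord_val //; apply: contra pmc => /eqP /qnorm2_eq0 ->.
  by [].
have u10 : antiext (fun i => ((u i).1)%:~R : R) 0 != 0.
  have [_ u_pos] := hfirst (inord 0) (inordK (ltn0Sn k)).
  by rewrite antiext_lt //= gt_eqF // ltr0z.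
have [S1 S2] := in_g_by_parts ga.
have := antiperiodic_eq0 (half_turn_lattice hup hfirst hconv) u10 (half_turn_angles hang)
  G11ge0 G22ge0 GD hX Xnz hA (antiext_end a) S1 S2.
by move=> a0; apply/funext => i; have := a0 i (ltn_ord i); rewrite antiext_lt // inord_val.
Qed.

End Quaternions.

Theorem mainTheorem4 (R : realType) (k : nat) (u : 'I_k -> int * int)
  (theta : 'I_k -> R) (Bs : ('I_k -> R) -> ('I_k -> R) -> R) :
  generates_lattice u ->
  cyc_consec_indep u ->
  upper_half u ->
  first_horizontal u ->
  convex_seq u ->
  conformal_angles theta ->
  Bstar_ok u theta Bs ->
  forall p : Hk R k, in_P u Bs p ->
  forall a : 'I_k -> R, in_g u a -> a <> (fun _ => 0) ->
  exists a' : 'I_k -> R, in_g u a' /\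
    I1d (fun q => mu1 Bs q a') p (Afield p a) <> 0.
Proof.
case: k u theta Bs => [|k] u theta Bs _ _ hup hfirst hconv hang hB p p_in_P a ga a_neq0.
  by exfalso; apply: a_neq0; apply/funext => -[].
apply: contrapT => no_witness.
have vanish a' : in_g u a' -> I1d (fun q => mu1 Bs q a') p (Afield p a) = 0.
  by move=> ga'; apply: contrapT => ne; apply: no_witness; exists a'.
have [G11 [G12 [G22 [G11ge0 G22ge0 GD gram]]]] := qnorm2_gram_of_in_P hB p_in_P.
apply: a_neq0; apply: in_g_in_W_eq0 hup hfirst hconv hang p_in_P.1 ga _ G11ge0 G22ge0 GD gram.
exact: in_W_of_I1d_mu1_eq0 hB vanish.
Qed.
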